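(* Let $\gamma:I\to\mathbb{R}^2$ be a smooth curve, star-shaped with respect to the origin and parametrized so that $[\gamma(t),\gamma'(t)]=1$, and let $p$ be its centroaffine curvature, defined by $\gamma''=-p\gamma$. Assume $p(t)\neq0$ and $p'(t)\neq 0$ for all $t\in I$. Then for any $t_0\neq t_1$ in $I$, the osculating central conics of $\gamma$ at $\gamma(t_0)$ and $\gamma(t_1)$ are disjoint and nested.
   Context: $[u,v]$ denotes the determinant of the $2\times2$ matrix with columns $u,v$; a curve is star-shaped with respect to the origin if $[\gamma,\gamma']\neq0$. A central conic is a curve $Q(X,Y):=aX^2+2bXY+cY^2=1$; it is an ellipse if $ac-b^2>0$ and a hyperbola if $ac-b^2<0$. The osculating central conic of $\gamma$ at $\gamma(t)$ is the central conic tangent to $\gamma$ at $\gamma(t)$ whose determinant $ac-b^2$ equals $p(t)$; explicitly, writing $\gamma=(x,y)$, its coefficients are $a=py^2+(y')^2$, $b=-(pxy+x'y')$, $c=px^2+(x')^2$. Two central conics $Q_1=1$, $Q_2=1$ are called nested if one of the sets $\{Q_1\ge 1\}$, $\{Q_2\ge1\}$ contains the other (for ellipses this is equivalent to one of the closed regions they bound containing the other). *)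

From Stdlib Require Import Reals.
From Coquelicot Require Import Coquelicot.
Open Scope R_scope.

Definition in_interval (a b : Rbar) (t : R) : Prop :=
  Rbar_lt a (Finite t) /\ Rbar_lt (Finite t) b.

Definition smooth_on (a b : Rbar) (f : R -> R) : Prop :=
  forall (n : nat) (t : R), in_interval a b t -> ex_derive (Derive_n f n) t.

Record central_conic := mk_conic { cc_a : R; cc_b : R; cc_c : R }.

Definition conicQ (C : central_conic) (X Y : R) : R :=
  cc_a C * X ^ 2 + 2 * cc_b C * X * Y + cc_c C * Y ^ 2.

Definition osc_conic (x y p : R -> R) (t : R) : central_conic :=
  mk_conic (p t * (y t) ^ 2 + (Derive y t) ^ 2)
           (- (p t * x t * y t + Derive x t * Derive y t))
           (p t * (x t) ^ 2 + (Derive x t) ^ 2).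

Definition conics_disjoint (C1 C2 : central_conic) : Prop :=
  ~ (exists X Y : R, conicQ C1 X Y = 1 /\ conicQ C2 X Y = 1).

Definition conics_nested (C1 C2 : central_conic) : Prop :=
  (forall X Y : R, conicQ C1 X Y >= 1 -> conicQ C2 X Y >= 1) \/
  (forall X Y : R, conicQ C2 X Y >= 1 -> conicQ C1 X Y >= 1).

(* For a
   fixed vector V = (X, Y) put g = [gamma, V] and h = [gamma', V]; then g' = h,
   h' = - p g, and the osculating conic form at parameter s evaluates at V to
       Q_s(V) = p(s) g(s)^2 + h(s)^2,   so that   d/ds Q_s(V) = p'(s) g(s)^2.
   Since p = [gamma', gamma''] is C^1 and p' never vanishes, p' has constant sign
   on the interval.  As g and h never vanish together when V <> 0, g cannot vanish
   on a subinterval, so s |-> Q_s(V) is strictly monotone for every V <> 0.  Hence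
   for t0 < t1 one form strictly dominates the other off the origin, which forces
   the level curves {Q = 1} to be disjoint and the regions {Q >= 1} to be nested. *)

From Stdlib Require Import Reals Lra.
From Coquelicot Require Import Coquelicot.
Open Scope R_scope.

Lemma in_interval_locally (a b : Rbar) (t : R) :
  in_interval a b t -> locally t (in_interval a b).
Proof.
  intros Ht. apply (locally_open (fun u : R => Rbar_lt a u /\ Rbar_lt u b)); auto.
  apply open_and; [apply open_Rbar_gt | apply open_Rbar_lt].
Qed.

Lemma in_interval_between (a b : Rbar) (u w s : R) :
  in_interval a b u -> in_interval a b w -> u <= s <= w -> in_interval a b s.
Proof. unfold in_interval; destruct a, b; simpl; intros; lra. Qed.

Lemma continuity_pt_of_ex_derive (f : R -> R) (s : R) :
  ex_derive f s -> continuity_pt f s.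
Proof.
  intros Hf. apply continuity_pt_filterlim. apply (ex_derive_continuous f s Hf).
Qed.

Lemma derive_of_locally_constant (F : R -> R) (c u w s l : R) :
  u < s < w -> (forall r, u < r < w -> F r = c) -> is_derive F s l -> l = 0.
Proof.
  intros Hs Hc HF.
  assert (Hconst : is_derive F s 0).
  { apply (is_derive_ext_loc (fun _ => c)); [|apply (is_derive_const c s)].
    apply (locally_open (fun r : R => u < r /\ r < w)); auto.
    - apply open_and; [apply open_gt | apply open_lt].
    - intros r Hr. symmetry; apply Hc; lra. }
  apply is_derive_unique in HF. apply is_derive_unique in Hconst. congruence.
Qed.

Lemma positive_persists (f : R -> R) (u w : R) :
  u < w -> (forall s, u <= s <= w -> continuity_pt f s) ->
  (forall s, u <= s <= w -> f s <> 0) -> 0 < f u -> 0 < f w.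
Proof.
  intros Huw Hc Hn Hfu.
  destruct (Rlt_or_le 0 (f w)) as [|Hfw]; auto. exfalso.
  assert (Hneg : f w < 0) by (assert (f w <> 0) by (apply Hn; lra); lra).
  destruct (Ranalysis5.IVT_interv (- f)%F u w) as [z [Hz Hfz]]; auto.
  - intros s Hs. apply continuity_pt_opp, Hc, Hs.
  - unfold opp_fct; lra.
  - unfold opp_fct; lra.
  - apply (Hn z Hz). unfold opp_fct in Hfz; lra.
Qed.

Lemma nondecreasing_of_derive_nonneg (F dF : R -> R) (u w : R) :
  (forall s, u <= s <= w -> is_derive F s (dF s)) ->
  (forall s, u <= s <= w -> 0 <= dF s) ->
  forall s s', u <= s -> s <= s' -> s' <= w -> F s <= F s'.
Proof.
  intros HD Hpos s s' H1 H2 H3.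
  destruct (MVT_gen F s s' dF) as [c [Hc Heq]];
    rewrite ?Rmin_left, ?Rmax_right in * by lra.
  - intros z Hz. apply HD; lra.
  - intros z Hz. apply continuity_pt_of_ex_derive. exists (dF z). apply HD; lra.
  - assert (0 <= dF c * (s' - s)) by (apply Rmult_le_pos; [apply Hpos|]; lra).
    lra.
Qed.

(* Strict version: if F' = k g^2 with k > 0 on [u, w], then F is strictly
   increasing unless g vanishes on a whole subinterval, which is excluded when g
   and its derivative h never vanish simultaneously. *)
Lemma increasing_of_weighted_square_derivative (F k g h : R -> R) (u w : R) :
  u < w ->
  (forall s, u <= s <= w -> is_derive F s (k s * g s ^ 2)) ->
  (forall s, u <= s <= w -> 0 < k s) ->
  (forall s, u < s < w -> is_derive g s (h s)) ->
  (forall s, u < s < w -> g s = 0 -> h s <> 0) ->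
  F u < F w.
Proof.
  intros Huw HF Hk Hg Hgh.
  assert (Hnonneg : forall s, u <= s <= w -> 0 <= k s * g s ^ 2).
  { intros s Hs. apply Rmult_le_pos; [left; apply Hk, Hs | apply pow2_ge_0]. }
  pose proof (nondecreasing_of_derive_nonneg F _ u w HF Hnonneg) as Hmono.
  destruct (Rlt_or_le (F u) (F w)) as [|Hflat]; auto. exfalso.
  assert (Hconst : forall s, u < s < w -> F s = F u).
  { intros s Hs. apply Rle_antisym.
    - apply Rle_trans with (F w); [apply Hmono|]; auto; lra.
    - apply Hmono; auto; lra. }
  assert (Hg0 : forall s, u < s < w -> g s = 0).
  { intros s Hs.
    assert (Hdz : k s * g s ^ 2 = 0).
    { apply (derive_of_locally_constant F (F u) u w s); auto. apply HF; lra. }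
    assert (0 < k s) by (apply Hk; lra).
    apply Rmult_integral in Hdz as [?|Hsq]; [lra|].
    destruct (Req_dec (g s) 0) as [|Hne]; auto. now apply (pow_nonzero _ 2) in Hne. }
  set (m := (u + w) / 2). assert (Hm : u < m < w) by (unfold m; lra).
  apply (Hgh m Hm (Hg0 m Hm)).
  apply (derive_of_locally_constant g 0 u w m); auto.
Qed.

Lemma conicQ_origin (C : central_conic) : conicQ C 0 0 = 0.
Proof. unfold conicQ; ring. Qed.

Lemma dominated_conics_disjoint_nested (C1 C2 : central_conic) :
  (forall X Y, ~ (X = 0 /\ Y = 0) -> conicQ C1 X Y < conicQ C2 X Y) ->
  conics_disjoint C1 C2 /\ conics_nested C1 C2.
Proof.
  intros Hlt.
  assert (Hnz : forall X Y, conicQ C1 X Y >= 1 -> ~ (X = 0 /\ Y = 0)).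
  { intros X Y HQ [-> ->]. rewrite conicQ_origin in HQ. lra. }
  split.
  - intros [X [Y [H1 H2]]].
    specialize (Hlt X Y (Hnz X Y (Req_ge _ _ H1))). lra.
  - left. intros X Y HQ. specialize (Hlt X Y (Hnz X Y HQ)). lra.
Qed.

Lemma disjoint_nested_sym (C1 C2 : central_conic) :
  conics_disjoint C1 C2 /\ conics_nested C1 C2 ->
  conics_disjoint C2 C1 /\ conics_nested C2 C1.
Proof.
  intros [Hd Hn]. split.
  - intros [X [Y [H1 H2]]]. apply Hd. now exists X, Y.
  - destruct Hn; [right | left]; assumption.
Qed.

Definition cross (u v : R -> R) (X Y s : R) : R := u s * Y - v s * X.

Lemma osc_conic_as_squares (x y p : R -> R) (s X Y : R) :
  conicQ (osc_conic x y p s) X Y =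
  p s * cross x y X Y s ^ 2 + cross (Derive x) (Derive y) X Y s ^ 2.
Proof. unfold conicQ, osc_conic, cross; simpl; ring. Qed.

(* Fold eta-expanded functions [fun r => f r] left over by [auto_derive], so that
   [ring] recognises equal atoms. *)
Ltac eta_fold :=
  repeat match goal with
  | |- context [fun r : R => ?f r] => change (fun r : R => f r) with f
  end.

Section CentroaffineCurve.

Variables (a b : Rbar) (x y p : R -> R).
Hypothesis Hsx : smooth_on a b x.
Hypothesis Hsy : smooth_on a b y.
Hypothesis Hdet :
  forall t, in_interval a b t -> x t * Derive y t - y t * Derive x t = 1.
Hypothesis Hpx : forall t, in_interval a b t -> Derive_n x 2 t = - p t * x t.
Hypothesis Hpy : forall t, in_interval a b t -> Derive_n y 2 t = - p t * y t.

Lemma curvature_as_bracket (s : R) : in_interval a b s ->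
  Derive x s * Derive (Derive y) s - Derive y s * Derive (Derive x) s = p s.
Proof.
  intros Hs. change (Derive (Derive y) s) with (Derive_n y 2 s).
  change (Derive (Derive x) s) with (Derive_n x 2 s).
  rewrite Hpx, Hpy by exact Hs.
  transitivity (p s * (x s * Derive y s - y s * Derive x s)); [ring|].
  rewrite Hdet by exact Hs. ring.
Qed.

Lemma curvature_derivative (s : R) : in_interval a b s ->
  is_derive p s (Derive x s * Derive_n y 3 s - Derive y s * Derive_n x 3 s).
Proof.
  intros Hs.
  apply (is_derive_ext_loc
    (fun r => Derive x r * Derive (Derive y) r - Derive y r * Derive (Derive x) r)).
  - apply (filter_imp (in_interval a b)); [|apply in_interval_locally, Hs].
    intros r Hr. apply curvature_as_bracket, Hr.
  - pose proof (Hsx 1%nat s Hs). pose proof (Hsx 2%nat s Hs).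
    pose proof (Hsy 1%nat s Hs). pose proof (Hsy 2%nat s Hs).
    auto_derive; [repeat split; assumption|].
    simpl. eta_fold. ring.
Qed.

Lemma curvature_derivative_continuous (s : R) : in_interval a b s ->
  continuity_pt (Derive p) s.
Proof.
  intros Hs.
  apply (continuity_pt_ext_loc
    (fun r => Derive x r * Derive_n y 3 r - Derive y r * Derive_n x 3 r)).
  - apply (filter_imp (in_interval a b)); [|apply in_interval_locally, Hs].
    intros r Hr. symmetry. apply is_derive_unique, curvature_derivative, Hr.
  - apply (continuity_pt_minus (fun r => Derive x r * Derive_n y 3 r)
                               (fun r => Derive y r * Derive_n x 3 r));
      apply (continuity_pt_mult (Derive _) (Derive_n _ 3));
      apply continuity_pt_of_ex_derive;
      [exact (Hsx 1%nat s Hs) | exact (Hsy 3%nat s Hs)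
      |exact (Hsy 1%nat s Hs) | exact (Hsx 3%nat s Hs)].
Qed.

Lemma cross_derivative (X Y s : R) : in_interval a b s ->
  is_derive (cross x y X Y) s (cross (Derive x) (Derive y) X Y s).
Proof.
  intros Hs. pose proof (Hsx 0%nat s Hs). pose proof (Hsy 0%nat s Hs).
  unfold cross. auto_derive; eta_fold; [repeat split; assumption | ring].
Qed.

Lemma cross_velocity_derivative (X Y s : R) : in_interval a b s ->
  is_derive (cross (Derive x) (Derive y) X Y) s (- p s * cross x y X Y s).
Proof.
  intros Hs. pose proof (Hsx 1%nat s Hs). pose proof (Hsy 1%nat s Hs).
  unfold cross. auto_derive; eta_fold; [repeat split; assumption|].
  change (Derive (Derive x) s) with (Derive_n x 2 s).
  change (Derive (Derive y) s) with (Derive_n y 2 s).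
  rewrite Hpx, Hpy by exact Hs. ring.
Qed.

(* Since gamma and gamma' form a basis, [gamma, V] and [gamma', V] cannot both
   vanish unless V = 0. *)
Lemma cross_nondegenerate (X Y s : R) : in_interval a b s ->
  ~ (X = 0 /\ Y = 0) -> cross x y X Y s = 0 ->
  cross (Derive x) (Derive y) X Y s <> 0.
Proof.
  intros Hs HV Hg Hh. apply HV. unfold cross in Hg, Hh.
  assert (HX : X = Derive x s * (x s * Y - y s * X) - x s * (Derive x s * Y - Derive y s * X)).
  { transitivity (X * (x s * Derive y s - y s * Derive x s)); [|ring].
    rewrite Hdet by exact Hs. ring. }
  assert (HY : Y = Derive y s * (x s * Y - y s * X) - y s * (Derive x s * Y - Derive y s * X)).
  { transitivity (Y * (x s * Derive y s - y s * Derive x s)); [|ring].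
    rewrite Hdet by exact Hs. ring. }
  rewrite Hg, Hh in HX, HY. split; lra.
Qed.

Lemma osc_conic_derivative (X Y s : R) : in_interval a b s ->
  is_derive (fun r => conicQ (osc_conic x y p r) X Y) s
            (Derive p s * cross x y X Y s ^ 2).
Proof.
  intros Hs.
  apply (is_derive_ext (fun r => p r * cross x y X Y r ^ 2
                                 + cross (Derive x) (Derive y) X Y r ^ 2)).
  { intros r. symmetry. apply osc_conic_as_squares. }
  pose proof (curvature_derivative s Hs) as Hp.
  pose proof (cross_derivative X Y s Hs) as Hg.
  pose proof (cross_velocity_derivative X Y s Hs) as Hh.
  auto_derive.
  - repeat split; eexists; eassumption.
  - eta_fold.
    rewrite (is_derive_unique _ _ _ Hg), (is_derive_unique _ _ _ Hh). ring.
Qed.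

Hypothesis Hp1 : forall t, in_interval a b t -> Derive p t <> 0.

Lemma curvature_derivative_sign (c u w s : R) :
  in_interval a b u -> in_interval a b w -> u <= s <= w ->
  0 < c * Derive p u -> 0 < c * Derive p s.
Proof.
  intros Hu Hw Hs Hc.
  destruct (Req_dec s u) as [->|Hsu]; [exact Hc|].
  assert (Hc0 : c <> 0) by (intros ->; lra).
  apply (positive_persists (mult_real_fct c (Derive p)) u s); auto; [lra| |].
  - intros r Hr. apply continuity_pt_scal, curvature_derivative_continuous.
    apply (in_interval_between a b u w); auto; lra.
  - intros r Hr. unfold mult_real_fct. apply Rmult_integral_contrapositive.
    split; [exact Hc0|]. apply Hp1, (in_interval_between a b u w); auto; lra.
Qed.

(* Consequently, at every vector V <> 0, the value of the osculating conic form
   is strictly monotone along the curve, increasing or decreasing according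
   to the sign c of p'. *)
Lemma osc_conic_monotone (c u w X Y : R) :
  in_interval a b u -> in_interval a b w -> u < w -> ~ (X = 0 /\ Y = 0) ->
  0 < c * Derive p u ->
  c * conicQ (osc_conic x y p u) X Y < c * conicQ (osc_conic x y p w) X Y.
Proof.
  intros Hu Hw Huw HV Hc.
  assert (HI : forall s, u <= s <= w -> in_interval a b s)
    by (intros s Hs; apply (in_interval_between a b u w); auto).
  apply (increasing_of_weighted_square_derivative
           (fun r => c * conicQ (osc_conic x y p r) X Y)
           (fun r => c * Derive p r) (cross x y X Y)
           (cross (Derive x) (Derive y) X Y) u w Huw).
  - intros s Hs. rewrite Rmult_assoc. apply is_derive_scal, osc_conic_derivative, HI, Hs.
  - intros s Hs. apply (curvature_derivative_sign c u w s); auto.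
  - intros s Hs. apply cross_derivative, HI. lra.
  - intros s Hs. apply cross_nondegenerate; auto. apply HI. lra.
Qed.

Lemma osc_conics_disjoint_nested (u w : R) :
  in_interval a b u -> in_interval a b w -> u < w ->
  conics_disjoint (osc_conic x y p u) (osc_conic x y p w) /\
  conics_nested (osc_conic x y p u) (osc_conic x y p w).
Proof.
  intros Hu Hw Huw.
  destruct (Rlt_or_le 0 (Derive p u)) as [Hpos|Hnpos].
  - apply dominated_conics_disjoint_nested. intros X Y HV.
    pose proof (osc_conic_monotone 1 u w X Y Hu Hw Huw HV) as Hmono. lra.
  - assert (Hneg : Derive p u < 0) by (pose proof (Hp1 u Hu); lra).
    apply disjoint_nested_sym, dominated_conics_disjoint_nested. intros X Y HV.
    pose proof (osc_conic_monotone (-1) u w X Y Hu Hw Huw HV) as Hmono. lra.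
Qed.

End CentroaffineCurve.

Theorem theorem2 (a b : Rbar) (x y p : R -> R)
  (Hsx : smooth_on a b x) (Hsy : smooth_on a b y)
  (Hdet : forall t, in_interval a b t -> x t * Derive y t - y t * Derive x t = 1)
  (Hpx : forall t, in_interval a b t -> Derive_n x 2 t = - p t * x t)
  (Hpy : forall t, in_interval a b t -> Derive_n y 2 t = - p t * y t)
  (Hp0 : forall t, in_interval a b t -> p t <> 0)
  (Hp1 : forall t, in_interval a b t -> Derive p t <> 0) :
  forall t0 t1, in_interval a b t0 -> in_interval a b t1 -> t0 <> t1 ->
    conics_disjoint (osc_conic x y p t0) (osc_conic x y p t1) /\
    conics_nested (osc_conic x y p t0) (osc_conic x y p t1).
Proof.
  intros t0 t1 H0 H1 Hne.
  destruct (Rlt_or_le t0 t1) as [Hlt|Hle].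
  - exact (osc_conics_disjoint_nested a b x y p Hsx Hsy Hdet Hpx Hpy Hp1 t0 t1 H0 H1 Hlt).
  - apply disjoint_nested_sym.
    apply (osc_conics_disjoint_nested a b x y p Hsx Hsy Hdet Hpx Hpy Hp1 t1 t0 H1 H0).
    lra.
Qed.
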